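(* Let $p\equiv1\pmod4$ be a prime. Let $S\subset\mathbb{P}^5$ be the surface over $\mathbb{F}_p$ defined by $x_1^2-x_2^2=x_3^2$, $x_0^2-x_1^2=x_4^2$, $x_0^2-x_2^2=x_5^2$, and let $X\subset\mathbb{A}^3$ be the affine surface over $\mathbb{F}_p$ given by $z^2=(x^2y^2+1)(x^2+y^2)$. Then $$|S(\mathbb{F}_p)|=|X(\mathbb{F}_p)|-1.$$ *)

From mathcomp Require Import all_boot all_algebra.
Set Implicit Arguments. Unset Strict Implicit. Unset Printing Implicit Defensive.
Import GRing.Theory.
Local Open Scope ring_scope.

(* A point of P^n(F) for a finite field F is represented by its unique
   normalized homogeneous coordinate vector: the first nonzero coordinate is 1. *)
Definition normalized (F : fieldType) (n : nat) (x : {ffun 'I_n -> F}) : bool :=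
  [exists i : 'I_n, (x i == 1) && [forall j : 'I_n, (j < i)%N ==> (x j == 0)]].

Definition S_points (p : nat) : {set {ffun 'I_6 -> 'F_p}} :=
  [set x | normalized x &&
    [&& x (inord 1) ^+ 2 - x (inord 2) ^+ 2 == x (inord 3) ^+ 2,
        x (inord 0) ^+ 2 - x (inord 1) ^+ 2 == x (inord 4) ^+ 2 &
        x (inord 0) ^+ 2 - x (inord 2) ^+ 2 == x (inord 5) ^+ 2]].

Definition X_points (p : nat) : {set 'F_p * 'F_p * 'F_p} :=
  [set t | let: (x, y, z) := t in
     z ^+ 2 == (x ^+ 2 * y ^+ 2 + 1) * (x ^+ 2 + y ^+ 2)].

(* A point of S with x3 <> 0 lies on the conics x1^2 - x2^2 = x3^2 and
   x5^2 - x4^2 = x3^2 (a consequence of the three equations), which are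
   rationally parametrized by s = (x1 + x2)/x3 and t = (x5 + x4)/x3, since
   then (x1 - x2)/x3 = 1/s and (x5 - x4)/x3 = 1/t.  The remaining equation
   x0^2 = x1^2 + x4^2 then says exactly that z = 2 s t x0/x3 satisfies
   z^2 = (s^2 t^2 + 1)(s^2 + t^2), so these points correspond to the points of
   X with xy <> 0.  All other points lie on lines and on copies of the
   hyperbola a^2 - e^2 = 1, which has q - 1 points over F_q for q odd: S has
   4q - 4 points with x3 = 0 and X has 4q - 3 points with xy = 0. *)

From mathcomp Require Import all_boot all_algebra.
From mathcomp Require Import ring zify.
Set Implicit Arguments. Unset Strict Implicit. Unset Printing Implicit Defensive.
Import GRing.Theory.
Local Open Scope ring_scope.

Section NormalizedRepresentatives.
Variables (F : fieldType) (n : nat).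
Implicit Types (l : F) (x : {ffun 'I_n -> F}).

Definition scalev l x : {ffun 'I_n -> F} := [ffun i => l * x i].

Lemma scalevA l1 l2 x : scalev l1 (scalev l2 x) = scalev (l1 * l2) x.
Proof. by apply/ffunP => i; rewrite !ffunE mulrA. Qed.

Lemma scale0v x : scalev 0 x = 0.
Proof. by apply/ffunP => i; rewrite !ffunE mul0r. Qed.

Lemma ffun_neq0 x i : x i != 0 -> x != 0.
Proof. by apply: contraNneq => ->; rewrite ffunE. Qed.

Lemma normalized_neq0 x : normalized x -> x != 0.
Proof.
case/existsP => i /andP[/eqP xi1 _].
by apply: (ffun_neq0 (i := i)); rewrite xi1 oner_neq0.
Qed.

Lemma normalized_scalev_neq0 l x : normalized (scalev l x) -> l != 0.
Proof. by move/normalized_neq0; apply: contraNneq => ->; rewrite scale0v. Qed.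

Lemma normalized_scalev_eq1 l x :
  normalized x -> normalized (scalev l x) -> l = 1.
Proof.
case/existsP => i /andP[/eqP xi1 /forallP xlt0].
case/existsP => j /andP[/eqP lxj1 /forallP lxlt0]; rewrite ffunE in lxj1.
have [ij|ji|/val_inj eij] := ltngtP i j.
- have /eqP := implyP (lxlt0 i) ij; rewrite ffunE xi1 mulr1 => l0.
  by move: lxj1; rewrite l0 mul0r => /eqP; rewrite eq_sym oner_eq0.
- have /eqP := implyP (xlt0 j) ji => xj0.
  by move: lxj1; rewrite xj0 mulr0 => /eqP; rewrite eq_sym oner_eq0.
- by rewrite -lxj1 -eij xi1 mulr1.
Qed.

Lemma normalized_scalev_exists x : x != 0 -> exists l, normalized (scalev l x).
Proof.
move=> x0; have [i0 xi0] : exists i, x i != 0.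
  by apply/existsP; apply: contraNT x0 => /existsPn xz; apply/eqP/ffunP => i;
     rewrite ffunE; apply/eqP/negPn.
case: (@arg_minnP _ i0 (fun i => x i != 0) val xi0) => i xi imin.
exists (x i)^-1; apply/existsP; exists i; rewrite ffunE mulVf // eqxx /=.
apply/forallP => j; apply/implyP => ji; rewrite ffunE.
suff /eqP -> : x j == 0 by rewrite mulr0.
by apply: contraTT ji => xj; rewrite -leqNgt imin.
Qed.

End NormalizedRepresentatives.

Section NormalizedChart.
Variables (F : finFieldType) (n : nat).

Lemma card_normalized_chart (P : pred {ffun 'I_n -> F}) (U : finType)
    (psi : {ffun 'I_n -> F} -> U) (gam : U -> {ffun 'I_n -> F}) :
  (forall l x, l != 0 -> P (scalev l x) = P x) ->
  (forall l x, l != 0 -> P x -> psi (scalev l x) = psi x) ->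
  (forall x, P x -> exists l, x = scalev l (gam (psi x))) ->
  (forall u, P (gam u) -> psi (gam u) = u /\ gam u != 0) ->
  #|[set x | normalized x && P x]| = #|[set u | P (gam u)]|.
Proof.
move=> PZ psiZ gam_psi psi_gam.
have -> : [set u | P (gam u)] = psi @: [set x | normalized x && P x].
  apply/setP => u; rewrite inE; apply/idP/imsetP => [Pu|[x]].
    have [psiK gam0] := psi_gam u Pu.
    have [l nl] := normalized_scalev_exists gam0.
    have l0 := normalized_scalev_neq0 nl.
    by exists (scalev l (gam u)); rewrite ?inE ?nl ?PZ ?psiZ.
  rewrite inE => /andP[nx Px] ->; have [l xE] := gam_psi x Px.
  have l0 : l != 0 by rewrite xE in nx; apply: normalized_scalev_neq0 nx.
  by rewrite -(PZ l) // -xE.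
apply/esym/card_in_imset => x1 x2; rewrite !inE => /andP[n1 P1] /andP[n2 P2] psi12.
have [l1 x1E] := gam_psi x1 P1; have [l2 x2E] := gam_psi x2 P2.
have l10 : l1 != 0 by rewrite x1E in n1; apply: normalized_scalev_neq0 n1.
have x21 : x2 = scalev (l2 / l1) x1.
  by rewrite x2E x1E scalevA -psi12 mulfVK.
by move: n2; rewrite x21 => /(normalized_scalev_eq1 n1) ->; apply/ffunP => i;
   rewrite ffunE mul1r.
Qed.

End NormalizedChart.

Section SixCoordinates.
Variable F : fieldType.
Implicit Types (a b c d e f l : F) (x : {ffun 'I_6 -> F}).

Definition vec6 a b c d e f : {ffun 'I_6 -> F} :=
  [ffun i : 'I_6 => nth 0 [:: a; b; c; d; e; f] i].

Lemma vec6E a b c d e f k : (k < 6)%N ->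
  vec6 a b c d e f (inord k) = nth 0 [:: a; b; c; d; e; f] k.
Proof. by move=> k6; rewrite ffunE inordK. Qed.

Variant vec6_spec x : Prop := Vec6 a b c d e f of x = vec6 a b c d e f.

Lemma vec6P x : vec6_spec x.
Proof.
exists (x (inord 0)) (x (inord 1)) (x (inord 2)) (x (inord 3)) (x (inord 4))
  (x (inord 5)).
by apply/ffunP => -[[|[|[|[|[|[|k]]]]]] // i6]; rewrite ffunE /=;
   congr (x _); apply: val_inj; rewrite /= inordK.
Qed.

Lemma scalev_vec6 l a b c d e f :
  scalev l (vec6 a b c d e f) = vec6 (l * a) (l * b) (l * c) (l * d) (l * e) (l * f).
Proof.
by apply/ffunP => -[[|[|[|[|[|[|k]]]]]] // i6]; rewrite !ffunE /= ?mulr0.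
Qed.

Lemma vec60 : vec6 0 0 0 0 0 0 = 0.
Proof. by apply/ffunP => -[[|[|[|[|[|[|k]]]]]] // i6]; rewrite !ffunE. Qed.

Definition S_eqs x : bool :=
  [&& x (inord 1) ^+ 2 - x (inord 2) ^+ 2 == x (inord 3) ^+ 2,
      x (inord 0) ^+ 2 - x (inord 1) ^+ 2 == x (inord 4) ^+ 2 &
      x (inord 0) ^+ 2 - x (inord 2) ^+ 2 == x (inord 5) ^+ 2].

Lemma S_eqs_vec6 a b c d e f : S_eqs (vec6 a b c d e f) =
  [&& b ^+ 2 - c ^+ 2 == d ^+ 2, a ^+ 2 - b ^+ 2 == e ^+ 2 & a ^+ 2 - c ^+ 2 == f ^+ 2].
Proof. by rewrite /S_eqs !vec6E. Qed.

Lemma S_eqs_scalev l x : l != 0 -> S_eqs (scalev l x) = S_eqs x.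
Proof.
move=> l0; have l20 : l ^+ 2 != 0 by rewrite expf_neq0.
have scaled u v w :
    ((l * u) ^+ 2 - (l * v) ^+ 2 == (l * w) ^+ 2) = (u ^+ 2 - v ^+ 2 == w ^+ 2).
  by rewrite !exprMn -mulrBr (inj_eq (mulfI l20)).
by rewrite /S_eqs !ffunE !scaled.
Qed.

Lemma S_eqs_sub a b c d e f : S_eqs (vec6 a b c d e f) -> f ^+ 2 - e ^+ 2 = d ^+ 2.
Proof.
rewrite S_eqs_vec6 => /and3P[/eqP <- /eqP <- /eqP <-]; ring.
Qed.

End SixCoordinates.

Definition X_eq (R : pzRingType) (u : R * R * R) : bool :=
  let: (x, y, z) := u in z ^+ 2 == (x ^+ 2 * y ^+ 2 + 1) * (x ^+ 2 + y ^+ 2).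

Section PlaneCurveCounts.
Variable F : finFieldType.
Hypothesis two_neq0 : (2 : F) != 0.

Lemma eq_oppr_self (x : F) : (x == - x) = (x == 0).
Proof. by rewrite -addr_eq0 -mulr2n -mulr_natl mulf_eq0 (negbTE two_neq0). Qed.

Lemma card_sqrt1 : #|[set x : F | x ^+ 2 == 1]| = 2%N.
Proof.
have -> : [set x : F | x ^+ 2 == 1] = [set 1; -1].
  by apply/setP => x; rewrite !inE sqrf_eq1.
by rewrite cards2 eq_oppr_self oner_neq0.
Qed.

Lemma card_sqr_eq (T : finType) (A : {set T}) (g : T -> F) :
  (#|[set w : T * F | (w.1 \in A) && (w.2 ^+ 2 == g w.1 ^+ 2)]|
     + #|[set x in A | g x == 0%R]| = #|A| + #|A|)%N.
Proof.
have mem_graph (B : {set T}) (h : T -> F) x y :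
    ((x, y) \in [set (z, h z) | z in B]) = (x \in B) && (y == h x).
  by apply/imsetP/andP => [[z zA [-> ->]] | [xA /eqP->]]; last exists x.
have graph_inj (h : T -> F) : injective (fun z => (z, h z)) by move=> z1 z2 [].
have := cardsUI [set (z, g z) | z in A] [set (z, - g z) | z in A].
rewrite !card_imset // => <-; congr (_ + _)%N.
  apply: eq_card => -[x y]; rewrite !inE !mem_graph /= eqf_sqr.
  by case: (x \in A).
rewrite -(card_imset _ (graph_inj (fun=> 0))); apply: eq_card => -[x y].
rewrite in_setI !mem_graph inE; case: (x \in A) => //=.
apply/andP/andP => [[/eqP gx0 /eqP->]|[/eqP-> ]]; first by rewrite gx0 oppr0.
by rewrite eq_oppr_self => ->.
Qed.

Definition hyperbola : {set F * F} := [set w | w.1 ^+ 2 - 1 == w.2 ^+ 2].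

Lemma card_hyperbola : (#|hyperbola| + 1 = #|F|)%N.
Proof.
pose h (u : F) := ((u + u^-1) / 2, (u - u^-1) / 2).
have h_inj : injective h.
  move=> u v [e1 e2].
  have sum_h (w : F) : w = (w + w^-1) / 2 + (w - w^-1) / 2.
    by move: (w^-1) => w'; field.
  by rewrite (sum_h u) (sum_h v) e1 e2.
have -> : hyperbola = h @: [set~ 0].
  apply/setP => -[a e]; rewrite inE /=; apply/idP/imsetP => [/eqP ae|].
    have ae1 : (a + e) * (a - e) = 1.
      by transitivity (a ^+ 2 - e ^+ 2); [ring | rewrite -ae; ring].
    have ae0 : a + e != 0.
      by apply: contra_eq_neq ae1 => ->; rewrite mul0r eq_sym oner_neq0.
    exists (a + e); first by rewrite !inE.
    by rewrite /h (mulr1_eq ae1); congr (_, _); field.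
  by case=> u; rewrite !inE => u0 [-> ->]; apply/eqP; field; rewrite two_neq0 u0.
by rewrite (card_imset _ h_inj) cardsC1 addn1 prednK //; apply/card_gt0P; exists 0.
Qed.

Lemma card_twin_hyperbola :
  (#|[set w : F * F * F | (w.1 \in hyperbola) && (w.2 ^+ 2 == w.1.2 ^+ 2)]| + 4
     = #|F| + #|F|)%N.
Proof.
have := card_sqr_eq hyperbola (fun w => w.2).
have -> : #|[set w in hyperbola | w.2 == 0]| = 2%N.
  have inj0 : injective (fun a : F => (a, 0 : F)) by move=> a b [].
  rewrite -card_sqrt1 -(card_imset _ inj0); apply: eq_card => -[a e].
  rewrite /hyperbola !inE /=.
  apply/andP/imsetP => [[/eqP ae /eqP e0]|[x]].
    by exists a; rewrite ?e0 // inE -subr_eq0 ae e0 expr2 mul0r.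
  by rewrite inE => /eqP x1 [-> ->]; rewrite x1 subrr expr2 mul0r.
by move=> hQ; rewrite -card_hyperbola addnACA -hQ -addnA.
Qed.

Definition axes : {set F * F} := [set v | (v.1 == 0) || (v.2 == 0)].

Lemma card_axes : (#|axes| + 1 = #|F| + #|F|)%N.
Proof.
have := cardsUI (setX [set 0 : F] [set: F]) (setX [set: F] [set 0 : F]).
rewrite !cardsX !cards1 cardsT mul1n muln1 => <-; congr (_ + _)%N.
  by apply: eq_card => -[s t]; rewrite !inE /= andbT.
rewrite -(cards1 (0 : F, 0 : F)); apply: eq_card => -[s t].
by rewrite !inE /= xpair_eqE !andbT.
Qed.

Lemma card_X_axes :
  (#|[set u : F * F * F | (u.1 \in axes) && X_eq u]| + 3 = 4 * #|F|)%N.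
Proof.
have := card_sqr_eq axes (fun v => v.1 + v.2).
have -> : #|[set v in axes | v.1 + v.2 == 0]| = 1%N.
  rewrite -(cards1 (0 : F, 0 : F)); apply: eq_card => -[s t].
  rewrite !inE xpair_eqE.
  have [->|] := eqVneq s 0; have [->|] := eqVneq t 0;
    by rewrite ?add0r ?addr0 ?eqxx //= => /negbTE->.
have -> : [set w : F * F * F | (w.1 \in axes) && (w.2 ^+ 2 == (w.1.1 + w.1.2) ^+ 2)]
    = [set u | (u.1 \in axes) && X_eq u].
  apply/setP => -[[s t] z]; rewrite !inE /=.
  have [->|s0] := eqVneq s 0.
    by rewrite add0r (expr2 0) !(mul0r, add0r, mul1r).
  have [->|//] := eqVneq t 0.
  by rewrite addr0 (expr2 0) !(mul0r, mulr0, add0r, addr0, mul1r).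
move=> hE; rewrite -[4%N]/(2 + 2)%N mulnDl mul2n -addnn -card_axes.
by rewrite addnACA -hE -addnA.
Qed.

End PlaneCurveCounts.

Section SurfaceStrata.
Variable F : finFieldType.
Hypothesis two_neq0 : (2 : F) != 0.
Implicit Types (l : F) (x : {ffun 'I_6 -> F}).

Definition S_open x := S_eqs x && (x (inord 3) != 0).

Definition open_coords x : F * F * F :=
  let s := (x (inord 1) + x (inord 2)) / x (inord 3) in
  let t := (x (inord 5) + x (inord 4)) / x (inord 3) in
  (s, t, 2 * s * t * x (inord 0) / x (inord 3)).

Definition open_point (u : F * F * F) : {ffun 'I_6 -> F} :=
  let: (s, t, z) := u in
  vec6 (z / (2 * s * t)) ((s + s^-1) / 2) ((s - s^-1) / 2) 1
       ((t - t^-1) / 2) ((t + t^-1) / 2).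

Lemma S_open_point s t z :
  S_open (open_point (s, t, z)) = [&& s != 0, t != 0 & X_eq (s, t, z)].
Proof.
rewrite /S_open /open_point vec6E //= oner_neq0 andbT.
have [->|s0] := eqVneq s 0.
  rewrite S_eqs_vec6 invr0 !(addr0, subr0, mul0r) (expr2 0) mul0r subr0.
  by rewrite expr1n eq_sym oner_eq0.
have [->|t0] := eqVneq t 0.
  apply/negP => /S_eqs_sub.
  rewrite invr0 !(addr0, subr0, mul0r) (expr2 0) mul0r subr0 expr1n.
  by move/eqP; rewrite eq_sym oner_eq0.
pose D := z ^+ 2 - (s ^+ 2 * t ^+ 2 + 1) * (s ^+ 2 + t ^+ 2).
have b2c2 : ((s + s^-1) / 2) ^+ 2 - ((s - s^-1) / 2) ^+ 2 = 1 ^+ 2.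
  by field; rewrite two_neq0 s0.
have a2b2e2 : (z / (2 * s * t)) ^+ 2 - ((s + s^-1) / 2) ^+ 2 - ((t - t^-1) / 2) ^+ 2
    = D / (2 * s * t) ^+ 2 by rewrite /D; field; rewrite two_neq0 s0 t0.
have a2c2f2 : (z / (2 * s * t)) ^+ 2 - ((s - s^-1) / 2) ^+ 2 - ((t + t^-1) / 2) ^+ 2
    = D / (2 * s * t) ^+ 2 by rewrite /D; field; rewrite two_neq0 s0 t0.
have move_rhs (u v w : F) : (u - v == w) = (u - v - w == 0) by rewrite subr_eq0.
rewrite S_eqs_vec6 b2c2 eqxx /= [X in X && _]move_rhs [X in _ && X]move_rhs.
rewrite a2b2e2 a2c2f2 andbb mulf_eq0 invr_eq0 !expf_eq0 /= !mulf_eq0.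
by rewrite (negbTE two_neq0) (negbTE s0) (negbTE t0) !orbF subr_eq0.
Qed.

Lemma open_point_coords x :
  S_open x -> exists l, x = scalev l (open_point (open_coords x)).
Proof.
case: (vec6P x) => a b c d e f ->.
rewrite /S_open /open_coords !vec6E //= => /andP[Sx d0].
have d20 : d ^+ 2 != 0 by rewrite expf_neq0.
have bc : (b + c) * (b - c) = d ^+ 2.
  by move: Sx; rewrite S_eqs_vec6 => /and3P[/eqP <- _ _]; ring.
have fe : (f + e) * (f - e) = d ^+ 2 by rewrite -(S_eqs_sub Sx); ring.
have bc0 : b + c != 0 by apply: contra_eq_neq bc => ->; rewrite mul0r eq_sym.
have fe0 : f + e != 0 by apply: contra_eq_neq fe => ->; rewrite mul0r eq_sym.
have sV : ((b + c) / d)^-1 = (b - c) / d.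
  by apply: mulr1_eq; rewrite mulrACA bc; field.
have tV : ((f + e) / d)^-1 = (f - e) / d.
  by apply: mulr1_eq; rewrite mulrACA fe; field.
exists d; rewrite /open_point sV tV scalev_vec6.
by congr vec6; field; rewrite ?d0 ?bc0 ?fe0 ?two_neq0.
Qed.

Lemma card_S_open : #|[set x | normalized x && S_open x]| =
  #|[set u : F * F * F | [&& u.1.1 != 0, u.1.2 != 0 & X_eq u]]|.
Proof.
have S_openZ l x : l != 0 -> S_open (scalev l x) = S_open x.
  by move=> l0; rewrite /S_open S_eqs_scalev // ffunE mulf_eq0 negb_or l0.
have coordsZ l x : l != 0 -> S_open x -> open_coords (scalev l x) = open_coords x.
  move=> l0 /andP[_ x30]; rewrite /open_coords !ffunE.
  by congr (_, _, _); field; rewrite ?l0 ?x30.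
have coords_point u :
    S_open (open_point u) -> open_coords (open_point u) = u /\ open_point u != 0.
  case: u => [[s t] z]; rewrite S_open_point => /and3P[s0 t0 _]; split.
    by rewrite /open_coords /open_point !vec6E //=; congr (_, _, _); field;
       rewrite ?oner_neq0 ?s0 ?t0 ?two_neq0.
  by apply: (ffun_neq0 (i := inord 3)); rewrite /open_point vec6E //= oner_neq0.
rewrite (card_normalized_chart S_openZ coordsZ open_point_coords coords_point).
by apply: eq_card => -[[s t] z]; rewrite !inE S_open_point.
Qed.

Definition S_edge x := [&& S_eqs x, x (inord 3) == 0 & x (inord 1) != 0].

Definition edge_coords x : F * (F * F * F) :=
  let b := x (inord 1) in
  (x (inord 2) / b, (x (inord 0) / b, x (inord 4) / b, x (inord 5) / b)).

Definition edge_point (v : F * (F * F * F)) : {ffun 'I_6 -> F} :=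
  let: (c, (a, e, f)) := v in vec6 a 1 c 0 e f.

Lemma card_S_edge : #|[set x | normalized x && S_edge x]| =
  (2 * #|[set w : F * F * F | (w.1 \in hyperbola F) && (w.2 ^+ 2 == w.1.2 ^+ 2)]|)%N.
Proof.
have S_edgeZ l x : l != 0 -> S_edge (scalev l x) = S_edge x.
  by move=> l0; rewrite /S_edge S_eqs_scalev // !ffunE !mulf_eq0 (negbTE l0).
have coordsZ l x : l != 0 -> S_edge x -> edge_coords (scalev l x) = edge_coords x.
  move=> l0 /and3P[_ _ x10]; rewrite /edge_coords !ffunE.
  by congr (_, (_, _, _)); field; rewrite ?l0 ?x10.
have point_coords x : S_edge x -> exists l, x = scalev l (edge_point (edge_coords x)).
  case: (vec6P x) => a b c d e f ->.
  rewrite /S_edge /edge_coords !vec6E //= => /and3P[_ /eqP-> b0].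
  by exists b; rewrite scalev_vec6 mulr0 mulr1; congr vec6; field.
have coords_point v :
    S_edge (edge_point v) -> edge_coords (edge_point v) = v /\ edge_point v != 0.
  case: v => c [[a e] f] _; split.
    by rewrite /edge_coords /edge_point !vec6E //= !divr1.
  by apply: (ffun_neq0 (i := inord 1)); rewrite /edge_point vec6E //= oner_neq0.
rewrite (card_normalized_chart S_edgeZ coordsZ point_coords coords_point).
rewrite -[X in (X * _)%N](card_sqrt1 two_neq0) -cardsX.
apply: eq_card => -[c [[a e] f]].
rewrite /hyperbola !inE /= /S_edge S_eqs_vec6 !vec6E //= eqxx oner_neq0 !andbT.
rewrite expr1n (expr2 0) mul0r subr_eq0 [1 == _]eq_sym.
by case: (c ^+ 2 =P 1) => [->|] //=; case: (a ^+ 2 - 1 =P e ^+ 2) => [->|] //=.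
Qed.

Definition S_corner x :=
  [&& S_eqs x, x (inord 3) == 0, x (inord 1) == 0 & x (inord 0) != 0].

Definition corner_coords x : F * F :=
  (x (inord 4) / x (inord 0), x (inord 5) / x (inord 0)).

Definition corner_point (v : F * F) : {ffun 'I_6 -> F} := vec6 1 0 0 0 v.1 v.2.

Lemma card_S_corner : #|[set x | normalized x && S_corner x]| = 4%N.
Proof.
have S_cornerZ l x : l != 0 -> S_corner (scalev l x) = S_corner x.
  by move=> l0; rewrite /S_corner S_eqs_scalev // !ffunE !mulf_eq0 (negbTE l0).
have coordsZ l x : l != 0 -> S_corner x -> corner_coords (scalev l x) = corner_coords x.
  move=> l0 /and4P[_ _ _ x00]; rewrite /corner_coords !ffunE.
  by congr (_, _); field; rewrite ?l0 ?x00.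
have point_coords x :
    S_corner x -> exists l, x = scalev l (corner_point (corner_coords x)).
  case: (vec6P x) => a b c d e f ->.
  rewrite /S_corner /corner_coords S_eqs_vec6 !vec6E //=.
  case/and4P => /and3P[/eqP bcd _ _] /eqP d0 /eqP b0 a0.
  move: bcd; rewrite b0 d0 (expr2 0) mul0r sub0r => /eqP.
  rewrite oppr_eq0 expf_eq0 /= => /eqP ->.
  by exists a; rewrite /corner_point scalev_vec6 /= mulr0 mulr1; congr vec6; field.
have coords_point v :
    S_corner (corner_point v) ->
    corner_coords (corner_point v) = v /\ corner_point v != 0.
  case: v => e f _; split.
    by rewrite /corner_coords /corner_point !vec6E //= !divr1.
  by apply: (ffun_neq0 (i := inord 0)); rewrite /corner_point vec6E //= oner_neq0.
rewrite (card_normalized_chart S_cornerZ coordsZ point_coords coords_point).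
rewrite -[4%N]/(2 * 2)%N -[in RHS](card_sqrt1 two_neq0) -cardsX.
apply: eq_card => -[e f]; rewrite !inE /corner_point /S_corner S_eqs_vec6 !vec6E //=.
by rewrite (expr2 0) mul0r subrr expr1n subr0 eqxx oner_neq0 !andbT ![1 == _]eq_sym.
Qed.

Lemma normalized_S_eqs_x0 x : normalized x -> S_eqs x ->
  x (inord 3) = 0 -> x (inord 1) = 0 -> x (inord 0) != 0.
Proof.
case: (vec6P x) => a b c d e f ->; rewrite S_eqs_vec6 !vec6E //= => nx.
case/and3P => /eqP bc /eqP ab /eqP ac d0 b0; apply: contraTneq nx => a0.
move: bc ab ac; rewrite a0 b0 d0 (expr2 0) mul0r !sub0r oppr0.
move=> /eqP; rewrite oppr_eq0 sqrf_eq0 => /eqP c0.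
move=> /esym/eqP; rewrite sqrf_eq0 => /eqP e0.
rewrite c0 (expr2 0) mul0r oppr0 => /esym/eqP; rewrite sqrf_eq0 => /eqP f0.
by rewrite e0 f0 vec60; apply: contraTN isT => /normalized_neq0; rewrite eqxx.
Qed.

Lemma card_S_strata : #|[set x : {ffun 'I_6 -> F} | normalized x && S_eqs x]| =
  (#|[set x | normalized x && S_open x]| + #|[set x | normalized x && S_edge x]|
     + #|[set x | normalized x && S_corner x]|)%N.
Proof.
set N := [set x : {ffun 'I_6 -> F} | normalized x && S_eqs x].
rewrite -(cardsID [set x : {ffun 'I_6 -> F} | x (inord 3) != 0] N).
rewrite -(cardsID [set x : {ffun 'I_6 -> F} | x (inord 1) != 0] (N :\: _)) addnA.
congr (_ + _ + _)%N; apply: eq_card => x; rewrite !inE /S_open /S_edge /S_corner.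
- by rewrite andbA.
- by rewrite negbK; case: (normalized x) (S_eqs x) (x (inord 3) == 0) => [] [] [].
rewrite !negbK; case: (x (inord 1) =P 0) => x10; case: (x (inord 3) =P 0) => x30;
  rewrite ?andbF //=.
apply/andP/and3P => [[nx Sx]|[]//]; split=> //.
exact: normalized_S_eqs_x0 nx Sx x30 x10.
Qed.

Lemma card_S_add1 : (#|[set x : {ffun 'I_6 -> F} | normalized x && S_eqs x]| + 1
  = #|[set u : F * F * F | X_eq u]|)%N.
Proof.
rewrite card_S_strata card_S_open card_S_edge card_S_corner.
rewrite -(cardsID [set u : F * F * F | (u.1.1 != 0) && (u.1.2 != 0)]
  [set u : F * F * F | X_eq u]).
have -> : #|[set u : F * F * F | X_eq u] :\: [set u | (u.1.1 != 0) && (u.1.2 != 0)]|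
    = #|[set u : F * F * F | (u.1 \in axes F) && X_eq u]|.
  by apply: eq_card => -[[s t] z]; rewrite !inE negb_and !negbK andbC.
have -> : #|[set u : F * F * F | X_eq u] :&: [set u | (u.1.1 != 0) && (u.1.2 != 0)]|
    = #|[set u : F * F * F | [&& u.1.1 != 0, u.1.2 != 0 & X_eq u]]|.
  by apply: eq_card => -[[s t] z]; rewrite !inE andbC -andbA.
have := card_twin_hyperbola two_neq0; have := card_X_axes two_neq0.
lia.
Qed.

End SurfaceStrata.

Local Close Scope ring_scope.

Theorem lemma4p4 (p : nat) (hp : prime p) (hp4 : p %% 4 = 1) :
  #|S_points p| = (#|X_points p| - 1)%N.
Proof.
(* p = 1 (mod 4) is only used to know that p is odd. *)
have two_neq0 : (2 : 'F_p)%R != 0%R.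
  apply/negP; rewrite -(dvdn_pcharf (pchar_Fp hp)) => /dvdn_leq p_le2.
  by have := p_le2 isT; have := prime_gt1 hp; lia.
have -> : S_points p = [set x | normalized x && S_eqs x] by [].
have -> : X_points p = [set u | X_eq u] by apply/setP => -[[x y] z]; rewrite !inE.
by rewrite -(card_S_add1 two_neq0) addnK.
Qed.
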